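(* Let $m\in\mathbb{N}$, $m\geq 2$, let $G$ be an abelian (locally compact) group, let $(X,G)$ and $(X',G)$ be minimal continuous actions, and let $\pi\colon X\to X'$ be a factor map. If $\pi$ is an $m$-MEF map, then $(X',G)$ is $m$-equicontinuous.
   Context: Actions are continuous actions on compact metric spaces; a factor map is a continuous equivariant surjection. For a surjection $\varphi\colon X\to Y$, $R_\varphi$ is the equivalence relation $x\sim y\iff\varphi(x)=\varphi(y)$ and $X/\varphi$ denotes the set of its equivalence classes. $\pi_{eq}\colon X\to X_{eq}$ is the factor map onto the maximal equicontinuous factor of $(X,G)$ (the equicontinuous factor of which every equicontinuous factor is a factor). A factor map $\pi\colon X\to X'$ is an $m$-MEF map if every class $A\in X/\pi_{eq}$ is a union $A=\bigcup_{i=1}^{m-1}B_i$ of $m-1$ (not necessarily distinct) classes $B_i\in X/\pi$. $(X',G)$ is $m$-equicontinuous if for every $x\in X'$ and $\varepsilon>0$ there is $\delta>0$ such that for any $x_1,\dots,x_m$ in the open ball $B_\delta(x)$ and every $g\in G$ there exist $i\neq j$ with $d(gx_i,gx_j)<\varepsilon$. *)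

From HB Require Import structures.
From mathcomp Require Import all_boot all_order all_algebra.
From mathcomp Require Import all_classical all_reals topology normedtype tvs.
Set Implicit Arguments. Unset Strict Implicit. Unset Printing Implicit Defensive.
Import Order.TTheory GRing.Theory Num.Theory.
Local Open Scope classical_set_scope.
Local Open Scope ring_scope.

Section Dyn.
Variables (R : realType) (G : topologicalZmodType).

(* X is a compact metric space: a compact Hausdorff (pseudo)metric space *)
Definition compact_metric (X : pseudoMetricType R) : Prop :=
  hausdorff_space X /\ compact [set: X].

Definition is_action (X : topologicalType) (act : G -> X -> X) : Prop :=
  [/\ (forall x, act 0 x = x),
      (forall g h x, act (g + h) x = act g (act h x)) &
      continuous (fun p : G * X => act p.1 p.2)].

Definition minimal_action (X : topologicalType) (act : G -> X -> X) : Prop :=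
  forall x : X, closure (range (fun g => act g x)) = [set: X].

Definition factor_map (X Y : topologicalType) (actX : G -> X -> X)
    (actY : G -> Y -> Y) (p : X -> Y) : Prop :=
  [/\ continuous p, (forall y : Y, exists x : X, p x = y) &
      (forall g x, p (actX g x) = actY g (p x))].

Definition equicontinuous_action (X : pseudoMetricType R) (act : G -> X -> X)
  : Prop :=
  forall (x : X) (e : R), 0 < e -> exists2 d : R, 0 < d &
    forall y : X, ball x d y -> forall g : G, ball (act g x) e (act g y).

Definition is_MEF_map (X Xeq : pseudoMetricType R) (actX : G -> X -> X)
    (actEq : G -> Xeq -> Xeq) (peq : X -> Xeq) : Prop :=
  [/\ factor_map actX actEq peq, equicontinuous_action actEq &
      forall (Z : pseudoMetricType R) (actZ : G -> Z -> Z) (psi : X -> Z),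
        compact_metric Z -> is_action actZ -> factor_map actX actZ psi ->
        equicontinuous_action actZ ->
        exists theta : Xeq -> Z,
          factor_map actEq actZ theta /\ forall x, psi x = theta (peq x)].

(* m-MEF map: every class of R_{peq} is a union of m-1 (not necessarily
   distinct) classes of R_p *)
Definition mMEF_map (m : nat) (X Xeq X' : Type) (peq : X -> Xeq) (p : X -> X')
  : Prop :=
  forall x : X, exists b : 'I_m.-1 -> X,
    [set y | peq y = peq x] = \bigcup_(i in [set: 'I_m.-1]) [set y | p y = p (b i)].

Definition m_equicontinuous (m : nat) (X : pseudoMetricType R)
    (act : G -> X -> X) : Prop :=
  forall (x : X) (e : R), 0 < e -> exists2 d : R, 0 < d &
    forall xs : 'I_m -> X, (forall i, ball x d (xs i)) ->
      forall g : G, exists i j : 'I_m, i != j /\ ball (act g (xs i)) e (act g (xs j)).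

End Dyn.

From HB Require Import structures.
From mathcomp Require Import all_boot all_order all_algebra.
From mathcomp Require Import all_classical all_reals topology normedtype tvs.
Set Implicit Arguments. Unset Strict Implicit. Unset Printing Implicit Defensive.
Import Order.TTheory GRing.Theory Num.Theory.
Local Open Scope classical_set_scope.
Local Open Scope ring_scope.

(* Suppose m-equicontinuity fails at x'.  Then there are m-tuples converging
   to x' along an ultrafilter, together with group elements spreading each
   tuple e-apart.  Lift the tuples to X and pass to limits: the lifts cluster
   in the p-fibre of x', which lies in a single class of the maximal
   equicontinuous factor, and equicontinuity of that factor keeps the m
   translated lifts in one class of peq in the limit.  That class meets at
   most m-1 fibres of p, so by pigeonhole two of the m translated points of X'
   have the same limit, contradicting their e-separation. *)

Lemma compact_ultra_cvg {T : Type} {X : topologicalType} {U : set_system T}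
    (f : T -> X) :
  UltraFilter U -> compact [set: X] -> exists c : X, f @ U --> c.
Proof.
move=> UU cX; have [c [_ cc]] := cX (f @ U) _ filterT.
exists c => N Nc; case: (in_ultra_setVsetC (f @^-1` N) UU) => // NCU.
by have [y []] := cc (~` N) N NCU Nc.
Qed.

Lemma cvg_near_ball {R : numFieldType} {M : pseudoMetricType R} {T : Type}
    (F : set_system T) {FF : Filter F} (f h : T -> M) (y : M) (e : R) :
  0 < e -> f @ F --> y -> h @ F --> y -> \forall t \near F, ball (f t) e (h t).
Proof.
move=> e0 fy hy; have e20 : 0 < e / 2 by rewrite divr_gt0.
apply: filterS (filterI (cvg_ball fy e20) (cvg_ball hy e20)) => t [yf yh].
by rewrite (splitr e); apply: ball_triangle (ball_sym yf) yh.
Qed.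

Lemma equicontinuous_cvg_orbit {R : realType} {G : topologicalZmodType}
    {X : pseudoMetricType R} (act : G -> X -> X) {T : Type}
    (F : set_system T) {FF : Filter F} (g : T -> G) (y : T -> X) (c w : X) :
  equicontinuous_action act -> y @ F --> c ->
  (fun t => act (g t) c) @ F --> w -> (fun t => act (g t) (y t)) @ F --> w.
Proof.
move=> eqc yc gcw; apply/cvg_ballP => e e0.
have e20 : 0 < e / 2 by rewrite divr_gt0.
have [d d0 eqd] := eqc c _ e20.
apply: filterS (filterI (cvg_ball yc d0) (cvg_ball gcw e20)) => t [cy wgc].
by rewrite (splitr e); apply: ball_triangle wgc (eqd _ cy (g t)).
Qed.

Section MEFFibres.
Variables (m : nat) (X Xeq X' : Type) (peq : X -> Xeq) (p : X -> X').
Hypothesis mMEF : mMEF_map m peq p.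

Lemma mMEF_fibre (a b : X) : p a = p b -> peq a = peq b.
Proof.
move=> pab; have [c cE] := mMEF b.
have : [set y | peq y = peq b] b by [].
rewrite cE => -[k _ /= pbk].
suff : [set y | peq y = peq b] a by [].
by rewrite cE; exists k => //=; rewrite pab.
Qed.

Lemma mMEF_pigeonhole (x : X) (u : 'I_m -> X) :
  (forall i, peq (u i) = peq x) -> exists i j, i != j /\ p (u i) = p (u j).
Proof.
move=> peq_u; have [c cE] := mMEF x.
have /choice[k pk] : forall i, exists k, p (u i) = p (c k).
  move=> i; have : [set y | peq y = peq x] (u i) by exact: peq_u.
  by rewrite cE => -[k _ ?]; exists k.
suff [i [j [ij kij]]] : exists i j, i != j /\ k i = k j.
  by exists i, j; rewrite !pk kij.
apply: contrapT => kinj.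
have [k0 _ _] : (\bigcup_(i in [set: 'I_m.-1]) [set y | p y = p (c i)]) x.
  by rewrite -cE.
have /leq_card : injective k.
  by move=> i j kij; apply/eqP/negPn/negP => ij; apply: kinj; exists i, j.
by rewrite !card_ord; case: (m) k0 => [[]|n _ /=]; rewrite ?ltnn.
Qed.

End MEFFibres.

Section MEFCollapse.
Variables (R : realType) (G : topologicalZmodType) (m : nat).
Variables (X X' Xeq : pseudoMetricType R).
Variables (actX : G -> X -> X) (actX' : G -> X' -> X') (actEq : G -> Xeq -> Xeq).
Variables (p : X -> X') (peq : X -> Xeq).
Hypotheses (cX : compact [set: X]) (hX' : hausdorff_space X').
Hypotheses (cEq : compact [set: Xeq]) (hEq : hausdorff_space Xeq).
Hypotheses (fp : factor_map actX actX' p) (fpeq : factor_map actX actEq peq).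
Hypotheses (eqEq : equicontinuous_action actEq) (mMEF : mMEF_map m peq p).

Lemma peq_cvg_from_p {T : Type} (U : set_system T) {UU : UltraFilter U}
    (z : T -> X) (x : X) :
  (fun t => p (z t)) @ U --> p x -> (fun t => peq (z t)) @ U --> peq x.
Proof.
move=> pzx; have [pc _ _] := fp; have [peqc _ _] := fpeq.
have [a za] := compact_ultra_cvg z UU cX.
suff -> : peq x = peq a by apply: continuous_cvg (peqc a) za.
apply: (mMEF_fibre mMEF); apply: (cvg_unique hX' pzx).
exact: continuous_cvg (pc a) za.
Qed.

Lemma mMEF_ultra_collapse {T : Type} (U : set_system T) {UU : UltraFilter U}
    (x' : X') (xs : T -> 'I_m -> X') (g : T -> G) :
  (forall i, (fun t => xs t i) @ U --> x') ->
  exists i j, i != j /\ exists y : X',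
    (fun t => actX' (g t) (xs t i)) @ U --> y /\
    (fun t => actX' (g t) (xs t j)) @ U --> y.
Proof.
move=> xsx'; have [pc /choice[L pL] pv] := fp; have [peqc peqsurj peqv] := fpeq.
pose z t i := L (xs t i).
have zpeq i : (fun t => peq (z t i)) @ U --> peq (L x').
  by apply: peq_cvg_from_p; rewrite pL /z; under eq_fun do rewrite pL; exact: xsx'.
have [u zu] := choice (fun i => compact_ultra_cvg
  (fun t => actX (g t) (z t i)) UU cX).
have [w gw] := compact_ultra_cvg (fun t => actEq (g t) (peq (L x'))) UU cEq.
have [x peqx] := peqsurj w.
have peq_u i : peq (u i) = peq x.
  have peq_orbit : (fun t => peq (actX (g t) (z t i))) @ U --> w.
    under eq_fun do rewrite peqv.
    exact: equicontinuous_cvg_orbit eqEq (zpeq i) gw.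
  rewrite peqx; apply: (cvg_unique hEq _ peq_orbit).
  exact: continuous_cvg (peqc _) (zu i).
have pu k : (fun t => actX' (g t) (xs t k)) @ U --> p (u k).
  have <- : p \o (fun t => actX (g t) (z t k)) = fun t => actX' (g t) (xs t k).
    by apply: funext => t /=; rewrite pv pL.
  exact: continuous_cvg (pc _) (zu k).
have [i [j [ij puij]]] := mMEF_pigeonhole mMEF peq_u.
by exists i, j; split => //; exists (p (u i)); rewrite {2}puij.
Qed.

End MEFCollapse.

Theorem lemma4p14 (R : realType) (m : nat) (G : topologicalZmodType)
    (X X' Xeq : pseudoMetricType R)
    (actX : G -> X -> X) (actX' : G -> X' -> X') (actEq : G -> Xeq -> Xeq)
    (p : X -> X') (peq : X -> Xeq) :
  (2 <= m)%N ->
  locally_compact [set: G] ->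
  compact_metric X -> compact_metric X' -> compact_metric Xeq ->
  is_action actX -> is_action actX' -> is_action actEq ->
  minimal_action actX -> minimal_action actX' ->
  factor_map actX actX' p ->
  is_MEF_map actX actEq peq ->
  mMEF_map m peq p ->
  m_equicontinuous m actX'.
Proof.
move=> _ _ [_ cX] [hX' _] [hEq cEq] _ _ _ _ _ fp [fpeq eqEq _] mMEF x' e e0.
apply: contrapT => /forall2NP not_eqc.
have spread d : exists xg : ('I_m -> X') * G, 0 < d ->
    (forall i, ball x' d (xg.1 i)) /\
    forall i j, i != j -> ~ ball (actX' xg.2 (xg.1 i)) e (actX' xg.2 (xg.1 j)).
  have [d0|_] := boolP (0 < d); last by exists (fun=> x', 0).
  case: (not_eqc d) => [/(_ d0)[]|/existsNP[xs /not_implyP[xsd /existsNP[g sep]]]].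
  exists (xs, g) => _; split=> // i j ij eij.
  by apply: sep; exists i, j.
have [xg xgP] := choice spread.
have [U [UU right0U]] := ultraFilterLemma (at_right_proper_filter (0 : R)).
have d0U : \forall d \near U, 0 < d := right0U _ (nbhs_right_gt 0).
have xsx' i : (fun d => (xg d).1 i) @ U --> x'.
  apply/cvg_ballP => r r0; have drU := right0U _ (nbhs_right_lt r0).
  apply: filterS (filterI d0U drU) => d [d0 dr].
  exact: le_ball (ltW dr) _ ((xgP d d0).1 i).
have [i [j [ij [y [yi yj]]]]] := mMEF_ultra_collapse cX hX' cEq hEq fp fpeq
  eqEq mMEF (fun d => (xg d).2) xsx'.
have [d [d0 eij]] := filter_ex (filterI d0U (cvg_near_ball e0 yi yj)).
exact: (xgP d d0).2 i j ij eij.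
Qed.
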